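(* Let $I$ be an infinite set of positive integers, let $c>0$ be a constant, and for each $n \in I$ let $H_n \le S_n$ be a subgroup with $|H_n| \le n^c$. Then the family $(S_n, H_n)_{n \in I}$ is distinguishable if and only if the minimal degrees are bounded, i.e. there is a constant $K$ such that $m(H_n) \le K$ for all sufficiently large $n \in I$.
   Context: For a finite group $G$, let $\mathrm{Irr}(G)$ be its set of complex irreducible characters and $d_\chi=\chi(e)$. For $H \le G$ let $D_H = \frac{1}{|G|}\sum_{\chi \in \mathrm{Irr}(G)} d_\chi \big|\sum_{h \in H, h \neq e}\chi(h)\big|$ (the $L_1$ distance between the distributions $P_H(\chi)=\frac{d_\chi}{|G|}\sum_{h\in H}\chi(h)$ and $P_{\{e\}}$ on $\mathrm{Irr}(G)$ produced by weak quantum Fourier sampling). Distinguishability is asymptotic: a family $(G_i,H_i)_{i \in I}$ with $H_i \le G_i$, $I$ an infinite set of positive integers and $|G_i| \to \infty$, is called distinguishable if there is a constant $c'>0$ such that $D_{H_i} \ge (\log|G_i|)^{-c'}$ for all sufficiently large $i \in I$, and indistinguishable otherwise. Here $S_n$ is the symmetric group on $\{1,\ldots,n\}$ (so $|S_n| = n!$). For $g \in S_n$, $\mathrm{supp}(g)$ is the number of points of $\{1,\dots,n\}$ moved by $g$. The minimal degree of $H \le S_n$ is $m(H) = \min\{\mathrm{supp}(h) : h \in H, h \neq e\}$, with the convention $m(\{e\}) = +\infty$. *)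

From HB Require Import structures.
From mathcomp Require Import all_boot all_order all_algebra all_fingroup.
From mathcomp Require Import all_field all_character.
From mathcomp Require Import all_classical all_reals all_analysis.
Set Implicit Arguments. Unset Strict Implicit. Unset Printing Implicit Defensive.
Import Order.TTheory GRing.Theory Num.Theory.
Local Open Scope ring_scope.

Definition supp (n : nat) (g : 'S_n) : nat := #|[set x : 'I_n | g x != x]|.

Definition min_degree (R : realType) (n : nat) (H : {group 'S_n}) : \bar R :=
  if H^#%g == finset.set0 then +oo%E
  else ((\big[minn/n.+1]_(h in H^#%g) supp h)%:R)%:E.

Definition D_H (n : nat) (H : {group 'S_n}) : algC :=
  (#|[set: 'S_n]|%:R)^-1 *
  \sum_(i : Iirr [set: 'S_n]%G)
     'chi[[set: 'S_n]%G]_i 1%g * `| \sum_(h in H | h != 1%g) 'chi[[set: 'S_n]%G]_i h |.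

(* comparison of a real number x with a real algebraic number d:  x <= d,
   via Dedekind cuts (every rational below x is at most d) *)
Definition le_real_algC (R : realType) (x : R) (d : algC) : Prop :=
  forall q : rat, ratr q < x -> (ratr q : algC) <= d.

Definition distinguishable_Sn (R : realType) (I : set nat)
    (H : forall n : nat, {group 'S_n}) : Prop :=
  exists c' : R, 0 < c' /\
    exists N : nat, forall n : nat, I n -> (N <= n)%N ->
      le_real_algC ((ln (#|[set: 'S_n]|%:R : R)) `^ (- c')) (D_H (H n)).

From HB Require Import structures.
From mathcomp Require Import all_boot all_order all_algebra all_fingroup.
From mathcomp Require Import all_field all_character.
From mathcomp Require Import all_classical all_reals all_analysis.
From mathcomp Require Import zify lra.
Set Implicit Arguments. Unset Strict Implicit. Unset Printing Implicit Defensive.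
Import Order.TTheory GRing.Theory Num.Theory.

(* If some h != 1 in H moves only s points, the second orthogonality relation
   gives D_H >= |C(h)| / n! >= (n - s)! / n! >= n^-s, which is at least
   (log n!)^-(s+1).  Conversely, suppose every h != 1 in H moves at least 3t
   points.  Then some t-set X is disjoint from hX, and the elements of C(h)
   fixing X pointwise also fix hX, so the product formula for Sym(~X) C(h)
   gives (n - t)! |C(h)| <= n! (n - 2t)!, whence (n - 2t)^t |C(h)| <= n!.
   Second orthogonality, sum chi(1)^2 = n! and AM-GM give
   sum_chi chi(1) |chi(h)| <= n!/L whenever L^2 |C(h)| <= n!, hence
   D_H <= |H|/L.  For L = n^k + 1 with k >= c + 2c' and t = 2k + 1 this is
   below (log n!)^-c', because |H| <= n^c and log n! <= n^2. *)

Lemma expn_subn_leq_ffact a m : (a - m) ^ m <= a ^_ m.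
Proof.
elim: m a => [|m IHm] [|a] //; first by rewrite sub0n exp0n.
by rewrite ffactSS expnS subSS leq_mul // (leq_trans (leq_subr _ _)).
Qed.

Lemma ffact_leq_expn n m : n ^_ m <= n ^ m.
Proof. by elim: m => // m IHm; rewrite ffactnSr expnSr leq_mul ?leq_subr. Qed.

Lemma exp4_leq_fact n : 9 <= n -> 4 ^ n <= n`!.
Proof.
elim: n => // n IHn; rewrite leq_eqVlt => /orP[/eqP <- | ]; first by vm_compute.
by rewrite ltnS expnS factS => n_ge9; rewrite leq_mul ?IHn //; lia.
Qed.

Lemma succ_expn_sqr_leq k n : 2 ^ (2 * k + 3) <= n ->
  (n ^ k).+1 ^ 2 <= (n - 2 * (2 * k + 1)) ^ (2 * k + 1).
Proof.
set t := 2 * k + 1 => n_large.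
have exp_t : 2 ^ (2 * k + 3) = 4 * 2 ^ t.
  by rewrite (_ : 2 * k + 3 = t.+2) ?expnS ?mulnA // /t; lia.
have four_t : 4 * t <= n.
  by apply: (leq_trans _ n_large); rewrite exp_t leq_mul2l /=; apply/ltnW/ltn_expl.
have L_le : (n ^ k).+1 ^ 2 <= 4 * n ^ (2 * k).
  have : 0 < n ^ k by rewrite expn_gt0; apply/orP; left; lia.
  by rewrite [2 * k]mulnC expnM; move: (n ^ k) => p p_gt0; nia.
have pow_le : 2 ^ t * (4 * n ^ (2 * k)) <= (2 * (n - 2 * t)) ^ t.
  apply: leq_trans (_ : n ^ t <= _); last by rewrite leq_exp2r ?addn1 //; lia.
  rewrite mulnA [2 ^ t * 4]mulnC -exp_t /t addn1 expnSr [_ * n]mulnC.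
  by rewrite leq_mul2r n_large orbT.
rewrite -(leq_pmul2l (expn_gt0 2 t)) -expnMn (leq_trans _ pow_le) //.
by rewrite leq_mul2l L_le orbT.
Qed.

Section PermCentralizer.
Variable T : finType.
Implicit Types (g h : {perm T}) (X : {set T}).

Definition moved g := [set x | g x != x].

Lemma perm_on_moved g : perm_on (moved g) g.
Proof. by apply/fintype.subsetP => x; rewrite !inE. Qed.

Lemma cardsC_sub X : #|~: X| = #|T| - #|X|.
Proof. by rewrite -(cardsC X) addKn. Qed.

Lemma cardsT_perm : #|[set: {perm T}]| = (#|T|)`!.
Proof.
rewrite cardsT -[#|T|]cardsT -card_perm; apply: eq_card => s.
by rewrite inE; symmetry; apply/fintype.subsetP => x; rewrite inE.
Qed.

Lemma Sym_fixed_sub_cent1 g : Sym (~: moved g) \subset 'C[g]%g.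
Proof.
have g_on := perm_on_moved g.
apply/fintype.subsetP => s; rewrite inE => s_on; apply/cent1P.
by apply: perm_onC s_on g_on _; rewrite finset.disjoints_subset.
Qed.

Lemma card_cent1_geq g : (#|T| - #|moved g|)`! <= #|'C[g]%g|.
Proof. by rewrite -cardsC_sub -card_Sym subset_leq_card ?Sym_fixed_sub_cent1. Qed.

Lemma Sym_cent1_fixed_sub h X : {in X, forall x, h x \notin X} ->
  Sym (~: X) :&: 'C[h]%g \subset Sym (~: (X :|: h @: X)).
Proof.
move=> hX; apply/fintype.subsetP => c; rewrite finset.in_setI inE => /andP[c_on /cent1P ch].
have cX x : x \in X -> c x = x by move=> xX; rewrite (out_perm c_on) // inE negbK.
rewrite inE; apply/fintype.subsetP => y; rewrite !inE; apply: contraR; rewrite negbK.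
case/orP => [/cX -> | /imsetP[x xX ->]]; first by rewrite eqxx.
by rewrite -permM -ch permM cX.
Qed.

Lemma card_cent1_leq h X : {in X, forall x, h x \notin X} ->
  (#|T| - #|X|)`! * #|'C[h]%g| <= (#|T|)`! * (#|T| - 2 * #|X|)`!.
Proof.
move=> hX.
have card_XhX : #|X :|: h @: X| = 2 * #|X|.
  rewrite cardsU card_imset; last exact: perm_inj.
  suff -> : X :&: h @: X = finset.set0 by rewrite cards0 subn0 mul2n addnn.
  apply/setP => y; rewrite !inE; apply/negP => /andP[yX /imsetP[x xX yE]].
  by move: (hX _ xX); rewrite -yE yX.
rewrite -cardsC_sub -card_XhX -cardsC_sub -!card_Sym -cardsT_perm.
by rewrite (mul_cardG (Sym_group (~: X)) 'C[h]%G) leq_mul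
  ?subset_leq_card ?finset.subsetT ?Sym_cent1_fixed_sub.
Qed.

Lemma exists_subset_disjoint_image h t : 3 * t <= #|moved h| ->
  exists X, #|X| = t /\ {in X, forall x, h x \notin X}.
Proof.
elim: t => [|t IHt] ht.
  by exists finset.set0; rewrite cards0; split=> // x; rewrite inE.
have [X [cardX hX]] : exists X, #|X| = t /\ {in X, forall x, h x \notin X}.
  by apply: IHt; apply: leq_trans ht; rewrite leq_mul2l leqnSn orbT.
pose F := X :|: h @: X :|: h^-1%g @: X.
have card_F : #|F| <= 3 * t.
  have [cardF _] := leq_card_setU (X :|: h @: X) (h^-1%g @: X).
  have [cardXhX _] := leq_card_setU X (h @: X).
  have := leq_imset_card h X; have := leq_imset_card h^-1%g X; rewrite /F; lia.
have [x hx xF] : exists2 x, x \in moved h & x \notin F.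
  by apply/fintype.subsetPn/negP => /subset_leq_card; lia.
have xX : x \notin X by apply: contra xF; rewrite !inE => ->.
exists (x |: X); split; first by rewrite cardsU1 xX cardX.
move=> y; rewrite !inE => /orP[/eqP -> | yX].
  rewrite negb_or; apply/andP; split; first by rewrite inE in hx.
  apply: contra xF => hxX; rewrite !inE; apply/orP; right.
  by apply/imsetP; exists (h x); rewrite ?permK.
rewrite negb_or hX // andbT; apply: contra xF => /eqP <-.
by rewrite !inE; apply/orP; left; apply/orP; right; apply/imsetP; exists y.
Qed.

Lemma card_cent1_large_moved h t : 3 * t <= #|moved h| ->
  (#|T| - 2 * t) ^ t * #|'C[h]%g| <= (#|T|)`!.
Proof.
move=> ht; have [X [cardX hX]] := exists_subset_disjoint_image ht.
have t_le : t <= #|T| - t by have := max_card (moved h); lia.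
have split_fact : (#|T| - t)`! = (#|T| - t) ^_ t * (#|T| - 2 * t)`!.
  by rewrite -(ffact_fact t_le) mul2n -addnn subnDA.
have pow_le : (#|T| - 2 * t) ^ t <= (#|T| - t) ^_ t.
  by rewrite mul2n -addnn subnDA expn_subn_leq_ffact.
have := card_cent1_leq hX; rewrite cardX split_fact mulnAC leq_pmul2r ?fact_gt0 //.
exact/leq_trans/leq_mul.
Qed.

End PermCentralizer.

Local Open Scope ring_scope.

Section FourierSampling.
Variables (gT : finGroupType) (G : {group gT}).

Definition qfs_distance (A : {set gT}) : algC :=
  #|G|%:R^-1 * \sum_(i : Iirr G) 'chi[G]_i 1%g * `|\sum_(h in A) 'chi_i h|.

Lemma cent1_le_qfs_distance (A : {set gT}) g : A \subset G -> g \in A ->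
  #|'C_G[g]%g|%:R / #|G|%:R <= qfs_distance A.
Proof.
move=> sAG Ag; rewrite /qfs_distance mulrC ler_wpM2l ?invr_ge0 ?ler0n //.
pose a i := \sum_(h in A) 'chi[G]_i h.
have class_sum : \sum_i a i * ('chi_i g)^* =
    \sum_(h in A) #|'C_G[h]%g|%:R *+ (h \in g ^: G)%g.
  under eq_bigr do rewrite mulr_suml.
  rewrite exchange_big; apply: eq_bigr => h _.
  by rewrite second_orthogonality_relation // (fintype.subsetP sAG).
have lower : #|'C_G[g]%g|%:R <= `|\sum_i a i * ('chi_i g)^*|.
  have terms_ge0 h : 0 <= #|'C_G[h]%g|%:R *+ (h \in (g ^: G)%g) :> algC.
    by rewrite mulrn_wge0.
  rewrite class_sum ger0_norm ?sumr_ge0 // (bigD1 g) //= class_refl.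
  by rewrite ?(fintype.subsetP sAG) // mulr1n lerDl sumr_ge0.
apply: le_trans lower (le_trans (ler_norm_sum _ _ _) (ler_sum _ _)) => i _.
rewrite normrM norm_conjC mulrC ler_wpM2r //.
exact/char1_ge_norm/irr_char.
Qed.

Lemma sum_irr1_norm_AMGM h (x : algC) : h \in G -> x \is Num.real ->
  (\sum_i 'chi[G]_i 1%g * `|'chi_i h|) * x *+ 2 <=
  #|G|%:R + x ^+ 2 * #|'C_G[h]%g|%:R.
Proof.
move=> Gh xR.
have norm2_sum : \sum_i `|'chi[G]_i h| ^+ 2 = #|'C_G[h]%g|%:R.
  have := second_orthogonality_relation h Gh; rewrite class_refl // mulr1n => <-.
  by apply: eq_bigr => i _; rewrite normCK.
rewrite -irr_sum_square -norm2_sum mulr_sumr -big_split mulr_suml -sumrMnl /=.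
apply: ler_sum => i _.
have chi1R : 'chi_i 1%g \is Num.real := ger0_real (ltW (irr1_gt0 i)).
have [+ _] := real_leif_mean_square_scaled chi1R (realM xR (normr_real ('chi_i h))).
by rewrite -mulrA [`|_| * x]mulrC -exprMn.
Qed.

Lemma sum_irr1_norm_le h (L : nat) : h \in G -> (0 < L)%N ->
    (L ^ 2 * #|'C_G[h]%g| <= #|G|)%N ->
  \sum_i 'chi[G]_i 1%g * `|'chi_i h| <= #|G|%:R / L%:R.
Proof.
move=> Gh L_gt0 hL; rewrite ler_pdivlMr ?ltr0n // -(ler_pMn2r (isT : (0 < 2)%N)).
apply: le_trans (sum_irr1_norm_AMGM (x := L%:R) Gh _) _; first exact: realn.
by rewrite mulr2n lerD2l -natrX -natrM ler_nat.
Qed.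

Lemma qfs_distance_le (A : {set gT}) (L : nat) : A \subset G -> (0 < L)%N ->
    {in A, forall h, L ^ 2 * #|'C_G[h]%g| <= #|G|}%N ->
  qfs_distance A <= #|A|%:R / L%:R.
Proof.
move=> sAG L_gt0 hL; have G_gt0 : (0 : algC) < #|G|%:R by rewrite ltr0n cardG_gt0.
have triangle : qfs_distance A <=
    #|G|%:R^-1 * \sum_(h in A) \sum_i 'chi[G]_i 1%g * `|'chi_i h|.
  rewrite /qfs_distance ler_wpM2l ?invr_ge0 ?(ltW G_gt0) // exchange_big /=.
  apply: ler_sum => i _; rewrite -mulr_sumr ler_wpM2l ?ler_norm_sum //.
  exact/ltW/irr1_gt0.
apply: le_trans triangle _; rewrite ler_pdivrMl //.
have term_le h : h \in A -> \sum_i 'chi[G]_i 1%g * `|'chi_i h| <= #|G|%:R / L%:R.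
  by move=> Ah; rewrite sum_irr1_norm_le ?(fintype.subsetP sAG) ?hL.
apply: le_trans (ler_sum _ term_le) _.
by rewrite sumr_const -[_ *+ #|A|]mulr_natr mulrA mulrAC.
Qed.

End FourierSampling.

Section RealBounds.
Variable R : realType.

Lemma expR1_le4 : expR (1 : R) <= 4.
Proof.
have half_le : (2 : R)^-1 <= expR (- 2^-1) by apply: le_trans (expR_ge1Dx _); lra.
have quarter_le : (4 : R)^-1 <= expR (-1).
  have -> : (-1 : R) = - 2^-1 + - 2^-1 by lra.
  rewrite expRD; apply: le_trans (ler_pM _ _ half_le half_le); lra.
have -> : expR (1 : R) = (expR (-1))^-1 by rewrite expRN invrK.
by rewrite -[X in _ <= X]invrK lef_pV2 ?posrE ?expR_gt0 //; lra.
Qed.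

Lemma ln_fact_ge n : (9 <= n)%N -> (n%:R : R) <= ln n`!%:R.
Proof.
move=> n_ge9; rewrite -ler_expR lnK ?posrE ?ltr0n ?fact_gt0 //.
rewrite -[n%:R]mul1r expRM_natr (le_trans (lerXn2r _ _ _ expR1_le4)) ?nnegrE ?expR_ge0 //.
by rewrite -natrX ler_nat exp4_leq_fact.
Qed.

Lemma ln_fact_le n : (0 < n)%N -> ln (n`!%:R : R) <= n%:R ^+ 2.
Proof.
move=> n_gt0; have n_pos : (0 : R) < n%:R by rewrite ltr0n.
apply: le_trans (_ : ln (n%:R ^+ n) <= _).
  rewrite ler_ln ?posrE ?exprn_gt0 ?ltr0n ?fact_gt0 // -natrX ler_nat.
  by rewrite -ffactnn ffact_leq_expn.
by rewrite lnXn // expr2 -[ln _ *+ n]mulr_natr ler_wpM2r ?ler0n // ltW ?ln_sublinear.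
Qed.

Lemma lt_powR_ln_fact (c c' : R) (k n m : nat) : 0 < c' -> c + 2 * c' <= k%:R ->
    (2 <= n)%N -> m%:R <= n%:R `^ c ->
  m%:R / (n ^ k).+1%:R < (ln n`!%:R) `^ (- c').
Proof.
move=> c'_gt0 ck n_ge2 m_le; set x := ln (n`!%:R : R).
have n_ge1 : (1 : R) <= n%:R by rewrite ler1n; lia.
have n_neq0 : n%:R != 0 :> R by rewrite pnatr_eq0; lia.
have x_gt0 : 0 < x by rewrite ln_gt0 // ltr1n (leq_trans n_ge2) ?fact_geq.
have x_le : x `^ c' <= n%:R `^ (2 * c').
  rewrite powRrM powR_mulrn ?ler0n // ge0_ler_powR ?nnegrE ?(ltW c'_gt0) ?(ltW x_gt0) //.
  by apply: ln_fact_le; lia.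
have mx_le : m%:R * x `^ c' <= n%:R `^ k%:R.
  apply: le_trans (ler_pM _ _ m_le x_le) _; rewrite ?ler0n ?powR_ge0 //.
  by rewrite -powRD ?n_neq0 ?implybT // ler_powR.
rewrite powRN ltr_pdivrMr ?ltr0n // mulrC ltr_pdivlMr ?powR_gt0 //.
by apply: le_lt_trans mx_le _; rewrite powR_mulrn ?ler0n // -natrX ltr_nat.
Qed.

Lemma powR_ln_fact_le_fact_div (k m n : nat) : (9 <= n)%N -> (m <= k)%N -> (m <= n)%N ->
  (ln (n`!%:R : R)) `^ (- k.+1%:R) <= (n - m)`!%:R / n`!%:R.
Proof.
move=> n_ge9 mk mn; set x := ln (n`!%:R : R).
have n_ge1 : (1 : R) <= n%:R by rewrite ler1n; lia.
have n_gt0 : (0 : R) < n%:R := lt_le_trans ltr01 n_ge1.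
have n_le_x : n%:R <= x := ln_fact_ge n_ge9.
have x_gt0 : 0 < x := lt_le_trans n_gt0 n_le_x.
rewrite powRN powR_mulrn ?(ltW x_gt0) //.
apply: (@le_trans _ _ (n%:R ^+ m)^-1).
  rewrite lef_pV2 ?posrE ?exprn_gt0 //.
  apply: le_trans (_ : n%:R ^+ k.+1 <= _); first by rewrite ler_weXn2l //; lia.
  by rewrite lerXn2r ?nnegrE ?ler0n ?(ltW x_gt0).
rewrite ler_pdivlMr ?ltr0n ?fact_gt0 // mulrC ler_pdivrMr ?exprn_gt0 //.
by rewrite -natrX -natrM ler_nat -(ffact_fact mn) mulnC leq_mul2l ffact_leq_expn orbT.
Qed.

Lemma le_real_algC_rat (x : R) (r : rat) (d : algC) :
  x <= ratr r -> ratr r <= d -> le_real_algC x d.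
Proof.
move=> xr rd q qx; apply: le_trans rd; rewrite ler_rat ltW // -(ltr_rat R).
exact: lt_le_trans xr.
Qed.

Lemma le_real_algC_le_rat (x : R) (d : algC) (r : rat) :
  le_real_algC x d -> d <= ratr r -> x <= ratr r.
Proof.
move=> xd dr; rewrite leNgt; apply/negP => /rat_in_itvoo[q].
rewrite in_itv /= => /andP[rq qx].
by move: (le_trans (xd q qx) dr); rewrite ler_rat leNgt -(ltr_rat R) rq.
Qed.

End RealBounds.

Section SymmetricGroup.
Variables (n : nat) (H : {group 'S_n}).

Lemma supp_leq (g : 'S_n) : (supp g <= n)%N.
Proof. by rewrite -[n in (_ <= n)%N]card_ord max_card. Qed.

Lemma min_degree_le_supp (R : realType) h :
  h \in H^#%g -> (min_degree R H <= (supp h)%:R%:E)%E.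
Proof.
move=> hH; rewrite /min_degree; case: eqP => [H0 | _]; first by move: hH; rewrite H0 inE.
by rewrite lee_fin ler_nat -minEnat; exact: (bigmin_le_cond _ (@supp n) hH).
Qed.

Lemma min_degree_le_exists (R : realType) (K : R) :
  (min_degree R H <= K%:E)%E -> exists2 h, h \in H^#%g & (supp h)%:R <= K.
Proof.
rewrite /min_degree; case: eqP => [_ | /eqP/finset.set0Pn[h hH]]; first by rewrite leye_eq.
rewrite -minEnat.
have [h' h'H ->] := eq_bigmin h _ (@supp n) hH (fun g _ => leqW (supp_leq g)).
by rewrite lee_fin; exists h'.
Qed.

Lemma D_HE : D_H H = qfs_distance [set: 'S_n]%G H^#%g.
Proof.
rewrite /D_H /qfs_distance; congr (_ * _); apply: eq_bigr => i _.
by congr (_ * `|_|); apply: eq_bigl => h; rewrite !inE andbC.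
Qed.

Lemma cent1_le_D_H g : g \in H^#%g -> (n - supp g)`!%:R / n`!%:R <= D_H H.
Proof.
move=> gH; rewrite D_HE; apply: le_trans (cent1_le_qfs_distance (finset.subsetT _) gH).
rewrite /= cardsT card_Sn ler_pM2r ?invr_gt0 ?ltr0n ?fact_gt0 // ler_nat finset.setTI.
by rewrite -[n in (n - _)%N]card_ord card_cent1_geq.
Qed.

Lemma D_H_le_large_supp t L : (0 < L)%N -> (L ^ 2 <= (n - 2 * t) ^ t)%N ->
    {in H^#%g, forall h, 3 * t <= supp h}%N ->
  D_H H <= #|H|%:R / L%:R.
Proof.
move=> L_gt0 L_le supp_ge; rewrite D_HE.
apply: le_trans (qfs_distance_le (finset.subsetT _) L_gt0 _) _.
  move=> h /supp_ge h_supp; rewrite /= cardsT card_Sn finset.setTI.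
  have := card_cent1_large_moved h_supp; rewrite card_ord; apply: leq_trans.
  by rewrite leq_mul2r L_le orbT.
by rewrite ler_pM2r ?invr_gt0 ?ltr0n // ler_nat subset_leq_card // subD1set.
Qed.

End SymmetricGroup.

Lemma exists_small_supp (R : realType) (c c' : R) k n (H : {group 'S_n}) :
    0 < c' -> c + 2 * c' <= k%:R -> (2 ^ (2 * k + 3) <= n)%N ->
    #|H|%:R <= n%:R `^ c -> le_real_algC ((ln n`!%:R) `^ (- c')) (D_H H) ->
  exists2 h, h \in H^#%g & (supp h < 3 * (2 * k + 1))%N.
Proof.
move=> c'_gt0 ck n_large H_small D_ge; apply/exists_inP; apply: contraT.
rewrite negb_exists_in => /forall_inP supp_ge.
have n_ge2 : (2 <= n)%N.
  by apply: leq_trans n_large; rewrite addnS expnS leq_pmulr ?expn_gt0.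
have D_le : D_H H <= ratr (#|H|%:R / (n ^ k).+1%:R : rat).
  rewrite fmorph_div /= !ratr_nat.
  apply: D_H_le_large_supp (succ_expn_sqr_leq n_large) _ => // h /supp_ge.
  by rewrite -leqNgt.
have := le_real_algC_le_rat D_ge D_le.
by rewrite fmorph_div /= !ratr_nat leNgt (lt_powR_ln_fact c'_gt0 ck n_ge2 H_small).
Qed.

Lemma min_degree_bounded_of_distinguishable (R : realType) (I : set nat) (c : R)
    (H : forall n, {group 'S_n}) :
    (forall n, I n -> #|H n|%:R <= n%:R `^ c) -> distinguishable_Sn R I H ->
  exists K : R, exists N, forall n, I n -> (N <= n)%N -> (min_degree R (H n) <= K%:E)%E.
Proof.
move=> H_small [c' [c'_gt0 [N D_ge]]].
pose k := (Num.truncn (c + 2 * c')).+1.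
have ck : c + 2 * c' <= k%:R := ltW (truncnS_gt _).
exists (3 * (2 * k + 1))%:R, (maxn N (2 ^ (2 * k + 3))) => n In.
rewrite geq_max => /andP[nN n_large].
have [|h hH h_supp] := exists_small_supp c'_gt0 ck n_large (H_small n In).
  by have := D_ge n In nN; rewrite cardsT card_Sn.
by apply: le_trans (min_degree_le_supp R hH) _; rewrite lee_fin ler_nat ltnW.
Qed.

Lemma distinguishable_of_min_degree_bounded (R : realType) (I : set nat)
    (H : forall n, {group 'S_n}) :
    (exists K : R, exists N, forall n, I n -> (N <= n)%N -> (min_degree R (H n) <= K%:E)%E) ->
  distinguishable_Sn R I H.
Proof.
move=> [K [N md_le]]; set k := Num.truncn K.
exists k.+1%:R; split; first by rewrite ltr0n.
exists (maxn N 9) => n In; rewrite geq_max => /andP[nN n_ge9].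
have [g gH g_supp] := min_degree_le_exists (md_le n In nN).
have supp_le : (supp g <= k)%N.
  by rewrite -ltnS -(ltr_nat R) (le_lt_trans g_supp) ?truncnS_gt.
rewrite cardsT card_Sn; apply: (@le_real_algC_rat _ _ ((n - supp g)`!%:R / n`!%:R)).
  by rewrite fmorph_div /= !ratr_nat powR_ln_fact_le_fact_div ?supp_leq.
by rewrite fmorph_div /= !ratr_nat cent1_le_D_H.
Qed.

Theorem theorem2 (R : realType) (I : set nat)
  (I_pos : forall n, I n -> (0 < n)%N)
  (I_inf : forall N : nat, exists n, I n /\ (N <= n)%N)
  (c : R) (c_pos : 0 < c)
  (H : forall n : nat, {group 'S_n})
  (H_small : forall n, I n -> (#|H n|%:R : R) <= (n%:R : R) `^ c) :
  distinguishable_Sn R I H <->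
  exists K : R, exists N : nat, forall n : nat, I n -> (N <= n)%N ->
    (min_degree R (H n) <= K%:E)%E.
Proof.
split; first exact: min_degree_bounded_of_distinguishable H_small.
exact: distinguishable_of_min_degree_bounded.
Qed.
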